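(* Let $\mathcal{I}$ be a hereditary weak P-ideal and $\mathcal{J}$ any ideal. Then $\mathcal{J}\preceq\mathcal{I}$ if and only if $\mathcal{J}\leq_K\mathcal{I}$.
   Context: An ideal on an infinite countable set $X$ is a family $\mathcal{I}\subseteq\mathcal{P}(X)$ closed under subsets and finite unions, containing all finite subsets, with $X\notin\mathcal{I}$. $\mathcal{I}|A=\{B\cap A:B\in\mathcal{I}\}$. $\mathcal{J}\leq_K\mathcal{I}$: there is a function $f:\bigcup\mathcal{I}\to\bigcup\mathcal{J}$ with $f^{-1}[B]\in\mathcal{I}$ for all $B\in\mathcal{J}$. $\mathrm{Fin}^2$: ideal on $\omega^2$ of all $A$ with only finitely many $n$ such that $\{m:(n,m)\in A\}$ is infinite. $\mathcal{I}\sqsubseteq\mathcal{J}$: there is a bijection $f:\bigcup\mathcal{J}\to\bigcup\mathcal{I}$ with $f^{-1}[A]\in\mathcal{J}$ for all $A\in\mathcal{I}$. $\mathcal{I}$ is a hereditary weak P-ideal if $\mathrm{Fin}^2\not\sqsubseteq\mathcal{I}|A$ for every $A\notin\mathcal{I}$. $\mathrm{Fin}\otimes\emptyset$: the family of $A\subseteq\omega^2$ with $A\subseteq F\times\omega$ for some finite $F$. If $(G_{i,j})_{(i,j)\in\omega^2}$ is a partition of $\bigcup\mathcal{I}$ (pieces may be empty) into sets from $\mathcal{I}$, then $\hat{\mathcal{I}}(G_{i,j})$ is the ideal on $\omega^2$ of all $A\subseteq\omega^2$ such that every $X\subseteq\bigcup_{(i,j)\in A}G_{i,j}$ with $X\cap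 G_{i,j}$ finite for all $(i,j)\in A$ belongs to $\mathcal{I}$. $\mathcal{J}\preceq\mathcal{I}$ means: for every partition $(H_{i,j})\subseteq\mathcal{J}$ of $\bigcup\mathcal{J}$ with $\mathrm{Fin}\otimes\emptyset\subseteq\hat{\mathcal{J}}(H_{i,j})$ there is a partition $(G_{i,j})\subseteq\mathcal{I}$ of $\bigcup\mathcal{I}$ with $\hat{\mathcal{J}}(H_{i,j})\cap\mathrm{Fin}^2\subseteq\hat{\mathcal{I}}(G_{i,j})$. *)

From Stdlib Require Import List.

Definition subset {T : Type} (A B : T -> Prop) : Prop := forall x, A x -> B x.

Definition finite_set {T : Type} (A : T -> Prop) : Prop :=
  exists l : list T, forall x, A x -> In x l.

Definition countable_type (T : Type) : Prop :=
  exists f : T -> nat, forall x y, f x = f y -> x = y.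

Definition infinite_type (T : Type) : Prop :=
  exists f : nat -> T, forall n m, f n = f m -> n = m.

Definition is_ideal {T : Type} (I : (T -> Prop) -> Prop) : Prop :=
  (forall A B : T -> Prop, subset A B -> I B -> I A) /\
  (forall A B : T -> Prop, I A -> I B -> I (fun x => A x \/ B x)) /\
  (forall A : T -> Prop, finite_set A -> I A) /\
  ~ I (fun _ => True).

Definition restrict {T : Type} (I : (T -> Prop) -> Prop) (A : T -> Prop)
  : (T -> Prop) -> Prop :=
  fun C => exists B, I B /\ (forall x, C x <-> (B x /\ A x)).

Definition Fin2 (A : nat * nat -> Prop) : Prop :=
  finite_set (fun n => ~ finite_set (fun m => A (n, m))).

Definition Fin_x_empty (A : nat * nat -> Prop) : Prop :=
  exists F : nat -> Prop, finite_set F /\ forall n m, A (n, m) -> F n.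

(* Fin^2 ⊑ K, where K is a family of subsets of T with ⋃K = D:
   there is a bijection f : D -> omega^2 such that f^{-1}[B] ∈ K for B ∈ Fin^2. *)
Definition Fin2_sqsub_on {T : Type} (K : (T -> Prop) -> Prop) (D : T -> Prop)
  : Prop :=
  exists f : T -> nat * nat,
    (forall x y, D x -> D y -> f x = f y -> x = y) /\
    (forall p, exists x, D x /\ f x = p) /\
    (forall B, Fin2 B -> K (fun x => D x /\ B (f x))).

(* hereditary weak P-ideal: Fin^2 ⋢ I|A for every A ∉ I (note ⋃(I|A) = A). *)
Definition hereditary_weak_P {T : Type} (I : (T -> Prop) -> Prop) : Prop :=
  forall A : T -> Prop, ~ I A -> ~ Fin2_sqsub_on (restrict I A) A.

Definition katetov_le {X Y : Type} (J : (Y -> Prop) -> Prop)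
  (I : (X -> Prop) -> Prop) : Prop :=
  exists f : X -> Y, forall B, J B -> I (fun x => B (f x)).

(* (G_{i,j}) is a partition of T (pieces may be empty) into sets from I *)
Definition ideal_partition {T : Type} (I : (T -> Prop) -> Prop)
  (G : nat * nat -> T -> Prop) : Prop :=
  (forall p q x, G p x -> G q x -> p = q) /\
  (forall x, exists p, G p x) /\
  (forall p, I (G p)).

Definition hat {T : Type} (I : (T -> Prop) -> Prop) (G : nat * nat -> T -> Prop)
  (A : nat * nat -> Prop) : Prop :=
  forall Z : T -> Prop,
    (forall x, Z x -> exists p, A p /\ G p x) ->
    (forall p, A p -> finite_set (fun x => Z x /\ G p x)) ->
    I Z.

Definition preceq {X Y : Type} (J : (Y -> Prop) -> Prop)
  (I : (X -> Prop) -> Prop) : Prop :=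
  forall H : nat * nat -> Y -> Prop,
    ideal_partition J H ->
    (forall A, Fin_x_empty A -> hat J H A) ->
    exists G : nat * nat -> X -> Prop,
      ideal_partition I G /\
      (forall A, hat J H A -> Fin2 A -> hat I G A).

(* If J <=_K I via f, the pullbacks f^-1[H_ij] form the required partition of X.
   Conversely, take for H the partition of Y into singletons H_n0 (and empty H_nm, m > 0).
   The key fact about a hereditary weak P-ideal I is that a union C of countably many
   disjoint pieces D_k in I lies in I as soon as every subset of C meeting each D_k
   finitely does: otherwise, after discarding the finite pieces, a bijection of C
   with omega^2 sending the infinite pieces to the columns witnesses Fin^2 below I|C.
   Applied first inside single columns and then to the column unions of the
   partition G provided by J preceq I, it shows that the union of the G_p over
   {p : H_p is contained in B} is in I whenever B is in J,
   so sending each x in G_p to the point of H_p is a Katetov reduction. *)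
From Stdlib Require Import List Arith Lia Classical ClassicalEpsilon.

Definition bigcup {K X : Type} (A : K -> Prop) (D : K -> X -> Prop) (x : X) : Prop :=
  exists k, A k /\ D k x.

Definition disjoint_family {X : Type} (D : nat -> X -> Prop) : Prop :=
  forall k k' x, D k x -> D k' x -> k = k'.

Definition meets_finitely {X : Type} (D : nat -> X -> Prop) (W : X -> Prop) : Prop :=
  forall k, finite_set (fun x => W x /\ D k x).

Section Finite.
Context {A B : Type}.

Lemma finite_subset (S T : A -> Prop) : finite_set T -> subset S T -> finite_set S.
Proof. intros [l hl] hST. exists l. intros x hx. exact (hl x (hST x hx)). Qed.

Lemma finite_functional_image (S : A -> Prop) (T : B -> Prop) (R : A -> B -> Prop) :
  finite_set S ->
  (forall a b b', R a b -> R a b' -> b = b') ->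
  (forall b, T b -> exists a, S a /\ R a b) ->
  finite_set T.
Proof.
  intros [l hl] hR hT.
  assert (himg : forall s : list A,
            exists t, forall b, (exists a, In a s /\ R a b) -> In b t).
  { induction s as [|a s [t IH]].
    - exists nil. intros b [a [[] _]].
    - destruct (classic (exists b0, R a b0)) as [[b0 hb0]|nb].
      + exists (b0 :: t). intros b [a' [[<-|i] r]].
        * left. exact (hR _ _ _ hb0 r).
        * right. eauto.
      + exists t. intros b [a' [[<-|i] r]].
        * exfalso. eauto.
        * eauto. }
  destruct (himg l) as [l' hl']. exists l'. intros b tb.
  apply hl'. destruct (hT b tb) as [a [sa r]]. eauto.
Qed.

End Finite.

Section Ideal.
Context {X : Type} (I : (X -> Prop) -> Prop) (hI : is_ideal I).

Lemma ideal_subset (S T : X -> Prop) : subset S T -> I T -> I S.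
Proof. apply (proj1 hI). Qed.

Lemma ideal_finite (S : X -> Prop) : finite_set S -> I S.
Proof. apply (proj1 (proj2 (proj2 hI))). Qed.

Lemma ideal_union_subset (S T U : X -> Prop) :
  I S -> I T -> (forall x, U x -> S x \/ T x) -> I U.
Proof.
  intros hS hT hU. apply (ideal_subset U (fun x => S x \/ T x)); [exact hU|].
  apply (proj1 (proj2 hI)); assumption.
Qed.

Lemma ideal_finite_union (F : nat -> Prop) (D : nat -> X -> Prop) :
  finite_set F -> (forall k, F k -> I (D k)) -> I (bigcup F D).
Proof.
  intros [l hl] hD.
  assert (hpiece : forall k, I (fun x => F k /\ D k x)).
  { intros k. destruct (classic (F k)) as [fk|nfk].
    - apply (ideal_subset _ (D k)); [intros x [_ d]; exact d | exact (hD k fk)].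
    - apply ideal_finite. exists nil. intros x [fk _]. contradiction. }
  assert (hlist : forall s : list nat, I (fun x => exists k, In k s /\ F k /\ D k x)).
  { induction s as [|a s IH].
    - apply ideal_finite. exists nil. intros x [k [[] _]].
    - apply (ideal_union_subset _ _ _ (hpiece a) IH).
      intros x [k [[<-|i] d]]; [left; exact d | right; eauto]. }
  apply (ideal_subset _ (fun x => exists k, In k l /\ F k /\ D k x)); [|apply hlist].
  intros x [k [fk d]]. exists k. auto.
Qed.

End Ideal.

Fixpoint rank (P : nat -> Prop) (n : nat) : nat :=
  match n with
  | 0 => 0
  | S n => rank P n + (if excluded_middle_informative (P n) then 1 else 0)
  end.

Section Rank.
Variable P : nat -> Prop.

Lemma rank_le_mono a b : a <= b -> rank P a <= rank P b.
Proof.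
  induction 1 as [|b _ IH]; simpl; [lia|].
  destruct excluded_middle_informative; lia.
Qed.

Lemma rank_lt_mono a b : P a -> a < b -> rank P a < rank P b.
Proof.
  intros pa lt. apply (Nat.lt_le_trans _ (rank P (S a))); [|apply rank_le_mono; lia].
  simpl. destruct excluded_middle_informative; [lia | contradiction].
Qed.

Lemma rank_inj a b : P a -> P b -> rank P a = rank P b -> a = b.
Proof.
  intros pa pb e. destruct (lt_eq_lt_dec a b) as [[lt|eq]|lt]; auto.
  - pose proof (rank_lt_mono a b pa lt). lia.
  - pose proof (rank_lt_mono b a pb lt). lia.
Qed.

Lemma infinite_unbounded : ~ finite_set P -> forall N, exists n, N <= n /\ P n.
Proof.
  intros hinf N. apply NNPP. intros hnone. apply hinf.
  exists (seq 0 N). intros n pn. apply in_seq.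
  destruct (le_lt_dec N n) as [le|lt]; [exfalso; eauto | lia].
Qed.

Lemma rank_hits N m : m < rank P N -> exists n, P n /\ rank P n = m.
Proof.
  induction N as [|N IH]; simpl; [lia|]. intros hm.
  destruct (le_lt_dec (rank P N) m) as [le|lt]; [|auto].
  destruct excluded_middle_informative; [|lia].
  exists N. split; [assumption | lia].
Qed.

Lemma rank_surj : ~ finite_set P -> forall m, exists n, P n /\ rank P n = m.
Proof.
  intros hinf m.
  assert (hbig : forall j, exists n, P n /\ j <= rank P n).
  { induction j as [|j [n [pn le]]].
    - destruct (infinite_unbounded hinf 0) as [n [_ pn]]. exists n. split; [exact pn | lia].
    - destruct (infinite_unbounded hinf (S n)) as [n' [le' pn']].
      exists n'. split; [exact pn'|].
      pose proof (rank_lt_mono n n' pn le'). lia. }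
  destruct (hbig m) as [n [pn le]]. apply (rank_hits (S n)). simpl.
  destruct excluded_middle_informative; [lia | contradiction].
Qed.

End Rank.

Section PartitionBijection.
Context {X : Type} (c : X -> nat) (c_inj : forall x y, c x = c y -> x = y).
Variables (K : nat -> Prop) (D : nat -> X -> Prop).
Hypotheses (K_inf : ~ finite_set K) (D_inf : forall k, K k -> ~ finite_set (D k))
  (D_disj : disjoint_family D).

Lemma bigcup_bijection_pairs : exists phi : X -> nat * nat,
  (forall x y, bigcup K D x -> bigcup K D y -> phi x = phi y -> x = y) /\
  (forall p, exists x, bigcup K D x /\ phi x = p) /\
  (forall k x, K k -> D k x -> fst (phi x) = rank K k).
Proof.
  set (idx x := epsilon (inhabits 0) (fun k => K k /\ D k x)).
  assert (idx_spec : forall x, bigcup K D x -> K (idx x) /\ D (idx x) x)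
    by (intros x hx; apply epsilon_spec, hx).
  assert (idx_eq : forall k x, K k -> D k x -> idx x = k).
  { intros k x kk d. apply (D_disj _ _ x); [apply idx_spec; exists k|]; auto. }
  set (code k n := exists x, D k x /\ c x = n).
  assert (code_inf : forall k, K k -> ~ finite_set (code k)).
  { intros k kk hfin. apply (D_inf k kk).
    apply (finite_functional_image (code k) (D k) (fun n x => c x = n) hfin).
    - intros n x x' e e'. apply c_inj. congruence.
    - intros x d. exists (c x). split; [exists x|]; auto. }
  exists (fun x => (rank K (idx x), rank (code (idx x)) (c x))). split; [|split].
  - intros x y hx hy e. injection e as e1 e2.
    destruct (idx_spec x hx) as [kx dx]. destruct (idx_spec y hy) as [ky dy].
    assert (ek : idx x = idx y) by exact (rank_inj K _ _ kx ky e1).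
    rewrite ek in e2. apply c_inj, (rank_inj (code (idx y))); auto.
    + exists x. rewrite <- ek. auto.
    + exists y. auto.
  - intros [j m].
    destruct (rank_surj K K_inf j) as [k [kk ek]].
    destruct (rank_surj (code k) (code_inf k kk) m) as [n [[x [d <-]] en]].
    exists x. split; [exists k; auto|].
    rewrite (idx_eq k x kk d), ek, en. reflexivity.
  - intros k x kk d. simpl. rewrite (idx_eq k x kk d). reflexivity.
Qed.

End PartitionBijection.

Section WeakP.
Context {X : Type} (I : (X -> Prop) -> Prop) (hI : is_ideal I).

Lemma Fin2_preimage_in_ideal (C : X -> Prop) (phi : X -> nat * nat) :
  (forall x y, C x -> C y -> phi x = phi y -> x = y) ->
  (forall n, I (fun x => C x /\ fst (phi x) = n)) ->
  (forall W, subset W C ->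
     (forall n, finite_set (fun x => W x /\ fst (phi x) = n)) -> I W) ->
  forall B, Fin2 B -> I (fun x => C x /\ B (phi x)).
Proof.
  intros phi_inj hcol hsel B hB.
  set (F n := ~ finite_set (fun m => B (n, m))).
  apply (ideal_union_subset I hI
           (bigcup F (fun n x => C x /\ fst (phi x) = n))
           (fun x => C x /\ B (phi x) /\ ~ F (fst (phi x)))).
  - apply (ideal_finite_union I hI); [exact hB | auto].
  - apply hsel; [intros x hx; apply hx|]. intros n.
    destruct (classic (F n)) as [fn|nfn].
    + exists nil. intros x [[_ [_ nf]] <-]. contradiction.
    + apply (finite_functional_image (fun m => B (n, m)) _
               (fun m x => C x /\ phi x = (n, m))).
      * apply NNPP, nfn.
      * intros m x x' [cx e] [cx' e']. apply phi_inj; congruence.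
      * intros x [[cx [bx _]] <-]. exists (snd (phi x)).
        rewrite <- surjective_pairing. auto.
  - intros x [cx bx]. destruct (classic (F (fst (phi x)))) as [fx|nfx].
    + left. exists (fst (phi x)). auto.
    + right. auto.
Qed.

Hypotheses (cX : countable_type X) (hwp : hereditary_weak_P I).

Lemma hereditary_weak_P_bigcup_infinite (K : nat -> Prop) (D : nat -> X -> Prop) :
  ~ finite_set K -> (forall k, K k -> ~ finite_set (D k)) -> disjoint_family D ->
  (forall k, K k -> I (D k)) ->
  (forall W, subset W (bigcup K D) -> meets_finitely D W -> I W) ->
  I (bigcup K D).
Proof.
  intros K_inf D_inf D_disj DI hsel.
  destruct cX as [c c_inj].
  destruct (bigcup_bijection_pairs c c_inj K D K_inf D_inf D_disj)
    as [phi [phi_inj [phi_surj phi_fst]]].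
  apply NNPP. intros nC. apply (hwp _ nC).
  exists phi. split; [exact phi_inj | split; [exact phi_surj|]].
  intros B hB. exists (fun x => bigcup K D x /\ B (phi x)). split; [|tauto].
  apply (Fin2_preimage_in_ideal _ phi phi_inj); [| |exact hB].
  - intros n. destruct (rank_surj K K_inf n) as [k [kk <-]].
    apply (ideal_subset I hI _ (D k)); [|exact (DI k kk)].
    intros x [[k' [kk' d]] e]. rewrite (phi_fst k' x kk' d) in e.
    rewrite <- (rank_inj K _ _ kk' kk e). exact d.
  - intros W hW hfin. apply hsel; [exact hW|]. intros k.
    apply (finite_subset _ _ (hfin (rank K k))).
    intros x [w d]. split; [exact w|].
    destruct (hW x w) as [k' [kk' d']].
    rewrite <- (D_disj _ _ x d' d). exact (phi_fst k' x kk' d').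
Qed.

Lemma hereditary_weak_P_bigcup (D : nat -> X -> Prop) :
  disjoint_family D -> (forall k, I (D k)) ->
  (forall W, subset W (fun x => exists k, D k x) -> meets_finitely D W -> I W) ->
  I (fun x => exists k, D k x).
Proof.
  intros D_disj DI hsel.
  set (K k := ~ finite_set (D k)).
  assert (hfinite_part : I (bigcup (fun k => ~ K k) D)).
  { apply hsel; [intros x [k [_ d]]; eauto|]. intros k.
    destruct (classic (K k)) as [kk|nkk].
    - exists nil. intros x [[k' [nkk' d']] d].
      rewrite (D_disj _ _ x d' d) in nkk'. contradiction.
    - apply (finite_subset _ (D k)); [apply NNPP, nkk | intros x [_ d]; exact d]. }
  assert (hinfinite_part : I (bigcup K D)).
  { destruct (classic (finite_set K)) as [kfin|kinf].
    - apply (ideal_finite_union I hI); [exact kfin | auto].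
    - apply hereditary_weak_P_bigcup_infinite; auto.
      intros W hW. apply hsel. intros x w. destruct (hW x w) as [k [_ d]]. eauto. }
  apply (ideal_union_subset I hI _ _ _ hinfinite_part hfinite_part).
  intros x [k d]. destruct (classic (K k)); [left | right]; exists k; auto.
Qed.

End WeakP.

Lemma Fin2_column (A : nat * nat -> Prop) (n : nat) :
  (forall p, A p -> fst p = n) -> Fin2 A.
Proof.
  intros hA. exists (n :: nil). intros j hj. left. apply NNPP. intros ne.
  apply hj. exists nil. intros m a. apply ne. symmetry. exact (hA _ a).
Qed.

Lemma Fin2_finite_columns (A : nat * nat -> Prop) :
  (forall n, finite_set (fun m => A (n, m))) -> Fin2 A.
Proof. intros hA. exists nil. intros n hn. exact (hn (hA n)). Qed.

Section Hat.
Context {X : Type} (I : (X -> Prop) -> Prop) (G : nat * nat -> X -> Prop).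
Hypotheses (hI : is_ideal I) (cX : countable_type X) (hwp : hereditary_weak_P I)
  (hG : ideal_partition I G).

Lemma hat_column_union (A : nat * nat -> Prop) (n : nat) :
  hat I G A -> (forall p, A p -> fst p = n) -> I (bigcup A G).
Proof.
  destruct hG as [G_disj [_ GI]]. intros hA hcol.
  set (D m x := A (n, m) /\ G (n, m) x).
  assert (hcover : forall p x, A p -> G p x -> D (snd p) x).
  { intros [n' m] x a g. pose proof (hcol _ a) as e. simpl in e. subst n'.
    split; assumption. }
  apply (ideal_subset I hI _ (fun x => exists m, D m x)).
  { intros x [p [a g]]. exists (snd p). exact (hcover p x a g). }
  apply (hereditary_weak_P_bigcup I hI cX hwp).
  - intros m m' x [_ g] [_ g']. pose proof (G_disj _ _ x g g') as e. congruence.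
  - intros m. apply (ideal_subset I hI _ (G (n, m))); [intros x [_ g]; exact g | apply GI].
  - intros W hW hfin. apply hA.
    + intros x w. destruct (hW x w) as [m [a g]]. eauto.
    + intros p a. apply (finite_subset _ _ (hfin (snd p))).
      intros x [w g]. split; [exact w | exact (hcover p x a g)].
Qed.

Lemma hat_Fin2_union (A : nat * nat -> Prop) :
  (forall A', subset A' A -> Fin2 A' -> hat I G A') -> I (bigcup A G).
Proof.
  destruct hG as [G_disj [_ GI]]. intros hA.
  set (column n p := fst p = n /\ A p).
  set (D n := bigcup (column n) G).
  apply (ideal_subset I hI _ (fun x => exists n, D n x)).
  { intros x [p [a g]]. exists (fst p), p. unfold column. auto. }
  apply (hereditary_weak_P_bigcup I hI cX hwp).
  - intros n n' x [p [[<- _] g]] [p' [[<- _] g']]. f_equal. exact (G_disj _ _ x g g').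
  - intros n. apply (hat_column_union (column n) n).
    + apply hA; [intros p [_ a]; exact a|]. apply (Fin2_column _ n). intros p [e _]. exact e.
    + intros p [e _]. exact e.
  - intros W hW hfin.
    (* The pieces met by W have finite columns, since W meets each column union finitely. *)
    set (AW p := A p /\ exists x, W x /\ G p x).
    assert (hAW : hat I G AW).
    { apply hA; [intros p [a _]; exact a|]. apply Fin2_finite_columns. intros n.
      apply (finite_functional_image _ _ (fun x m => G (n, m) x) (hfin n)).
      - intros x m m' g g'. pose proof (G_disj _ _ x g g') as e. congruence.
      - intros m [a [x [w g]]]. exists x. split; [split; [exact w|] | exact g].
        exists (n, m). unfold column. auto. }
    apply hAW.
    + intros x w. destruct (hW x w) as [n [p [[_ a] g]]]. exists p. split; [|exact g].
      split; [exact a | exists x; auto].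
    + intros p ap. apply (finite_subset _ _ (hfin (fst p))).
      intros x [w g]. split; [exact w|].
      exists p. split; [split; [reflexivity | apply ap] | exact g].
Qed.

End Hat.

Definition singletons {Y : Type} (c : Y -> nat) (p : nat * nat) (y : Y) : Prop :=
  snd p = 0 /\ c y = fst p.

Section Singletons.
Context {Y : Type} (J : (Y -> Prop) -> Prop) (hJ : is_ideal J).
Context (c : Y -> nat) (c_inj : forall x y, c x = c y -> x = y).

Lemma singletons_unique p y y' : singletons c p y -> singletons c p y' -> y = y'.
Proof. intros [_ e] [_ e']. apply c_inj. congruence. Qed.

Lemma ideal_partition_singletons : ideal_partition J (singletons c).
Proof.
  split; [|split].
  - intros [a b] [a' b'] y [e1 e2] [e3 e4]. simpl in *. congruence.
  - intros y. exists (c y, 0). split; reflexivity.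
  - intros p. apply (ideal_finite J hJ).
    destruct (classic (exists y, singletons c p y)) as [[y hy]|none].
    + exists (y :: nil). intros y' h'. left. exact (singletons_unique p y y' hy h').
    + exists nil. intros y' h'. exfalso. eauto.
Qed.

Lemma hat_singletons_Fin_x_empty (A : nat * nat -> Prop) :
  Fin_x_empty A -> hat J (singletons c) A.
Proof.
  intros [F [hF hA]] Z hZ _. apply (ideal_finite J hJ).
  apply (finite_functional_image F Z (fun n y => c y = n) hF).
  - intros n y y' e e'. apply c_inj. congruence.
  - intros y z. destruct (hZ y z) as [[n m] [a [_ e]]]. simpl in e.
    exists n. split; [exact (hA n m a) | exact e].
Qed.

End Singletons.

Lemma katetov_le_of_partitions {X Y : Type}
  (I : (X -> Prop) -> Prop) (J : (Y -> Prop) -> Prop)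
  (H : nat * nat -> Y -> Prop) (G : nat * nat -> X -> Prop) :
  is_ideal I -> is_ideal J -> countable_type X -> hereditary_weak_P I -> inhabited Y ->
  (forall p y y', H p y -> H p y' -> y = y') ->
  ideal_partition I G ->
  (forall A, hat J H A -> Fin2 A -> hat I G A) ->
  katetov_le J I.
Proof.
  intros hI hJ cX hwp y0 H_unique hG hGH. pose proof hG as [G_disj [G_cover _]].
  exists (fun x => epsilon y0 (fun y => exists p, G p x /\ H p y)).
  intros B hB.
  apply (ideal_subset I hI _ (bigcup (fun p => forall y, H p y -> B y) G)).
  - intros x bx. destruct (G_cover x) as [p g]. exists p. split; [|exact g].
    intros y h.
    assert (hex : exists y', exists p, G p x /\ H p y') by eauto.
    destruct (epsilon_spec y0 _ hex) as [p' [g' h']].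
    rewrite (G_disj _ _ _ g g') in h. rewrite (H_unique _ _ _ h h'). exact bx.
  - apply (hat_Fin2_union I G hI cX hwp hG). intros A' hA' hfin. apply hGH; [|exact hfin].
    intros Z hZ _. apply (ideal_subset J hJ _ B); [|exact hB].
    intros y z. destruct (hZ y z) as [p [a h]]. exact (hA' p a y h).
Qed.

Lemma preceq_of_katetov_le {X Y : Type}
  (I : (X -> Prop) -> Prop) (J : (Y -> Prop) -> Prop) :
  is_ideal I -> katetov_le J I -> preceq J I.
Proof.
  intros hI [f hf] H [H_disj [H_cover HJ]] _.
  exists (fun p x => H p (f x)). split; [split; [|split]|].
  - intros p q x. apply H_disj.
  - intros x. apply H_cover.
  - intros p. apply hf, HJ.
  - intros A hA _ Z hZ hfin.
    set (fZ y := exists x, Z x /\ f x = y).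
    apply (ideal_subset I hI _ (fun x => fZ (f x))); [intros x z; exists x; auto|].
    apply hf, hA.
    + intros y [x [z <-]]. exact (hZ x z).
    + intros p a. apply (finite_functional_image _ _ (fun x y => f x = y) (hfin p a)).
      * intros x y y' <- <-. reflexivity.
      * intros y [[x [z <-]] h]. exists x. auto.
Qed.

Theorem proposition8p5 (X Y : Type)
  (I : (X -> Prop) -> Prop) (J : (Y -> Prop) -> Prop) :
  countable_type X -> infinite_type X ->
  countable_type Y -> infinite_type Y ->
  is_ideal I -> is_ideal J ->
  hereditary_weak_P I ->
  (preceq J I <-> katetov_le J I).
Proof.
  intros cX _ [c c_inj] [e _] hI hJ hwp. split.
  - intros hpre.
    destruct (hpre (singletons c)) as [G [hG hGH]].
    + exact (ideal_partition_singletons J hJ c c_inj).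
    + exact (hat_singletons_Fin_x_empty J hJ c c_inj).
    + apply (katetov_le_of_partitions I J (singletons c) G hI hJ cX hwp (inhabits (e 0))).
      * exact (singletons_unique c c_inj).
      * exact hG.
      * exact hGH.
  - exact (preceq_of_katetov_le I J hI).
Qed.
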